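(* Let $\mathcal{C}$ be a category and $A$ an object of $\mathcal{C}$ such that every object $X$ with $X\leqslant^d A$ has the $d$-equality property. Then $D(A)=SD(A)$.
   Context: In a category $\mathcal{C}$, $X\leqslant^d Y$ means there are morphisms $f:X\to Y$, $g:Y\to X$ with $g\circ f=\mathrm{id}_X$. $X<^s Y$ means $X\leqslant^d Y$ holds but $Y\leqslant^d X$ fails; $X<^p Y$ means $X\leqslant^d Y$ and $X\not\cong Y$. A chain (resp. $s$-chain) of length $k$ for $A$ is $X_k<^p\cdots<^p X_1\leqslant^d A$ (resp. $X_k<^s\cdots<^s X_1\leqslant^d A$); $D(A)$ (resp. $SD(A)$) is the supremum of their lengths. An object $X$ has the $d$-equality property if every object $Y$ with $Y\leqslant^d X$ and $X\leqslant^d Y$ is isomorphic to $X$. *)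

From Stdlib Require Import Arith.

Record Category := {
  Obj :> Type;
  Hom : Obj -> Obj -> Type;
  idm : forall X : Obj, Hom X X;
  comp : forall X Y Z : Obj, Hom Y Z -> Hom X Y -> Hom X Z;
  comp_idl : forall X Y (f : Hom X Y), comp X Y Y (idm Y) f = f;
  comp_idr : forall X Y (f : Hom X Y), comp X X Y f (idm X) = f;
  comp_assoc : forall X Y Z W (f : Hom X Y) (g : Hom Y Z) (h : Hom Z W),
      comp X Z W h (comp X Y Z g f) = comp X Y W (comp Y Z W h g) f
}.

Arguments Hom {c} X Y.
Arguments idm {c} X.
Arguments comp {c X Y Z} g f.

(* X <=^d Y : X is a retract of Y *)
Definition dle {C : Category} (X Y : C) : Prop :=
  exists (f : Hom X Y) (g : Hom Y X), comp g f = idm X.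

Definition iso {C : Category} (X Y : C) : Prop :=
  exists (f : Hom X Y) (g : Hom Y X), comp g f = idm X /\ comp f g = idm Y.

Definition slt {C : Category} (X Y : C) : Prop := dle X Y /\ ~ dle Y X.

Definition plt {C : Category} (X Y : C) : Prop := dle X Y /\ ~ iso X Y.

(* a chain of length k for A w.r.t. a strict relation R:
   X_k R ... R X_1 <=^d A, objects indexed X 1, ..., X k, with k >= 1 *)
Definition has_chain_rel {C : Category} (R : C -> C -> Prop) (A : C) (k : nat) : Prop :=
  1 <= k /\
  exists X : nat -> C, dle (X 1) A /\ (forall i, 1 <= i -> i < k -> R (X (S i)) (X i)).

Definition has_chain {C : Category} (A : C) (k : nat) : Prop := has_chain_rel plt A k.
Definition has_schain {C : Category} (A : C) (k : nat) : Prop := has_chain_rel slt A k.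

Inductive enat : Type := Fin (n : nat) | Inf.

Definition ele (a b : enat) : Prop :=
  match a, b with
  | _, Inf => True
  | Inf, Fin _ => False
  | Fin m, Fin n => m <= n
  end.

Definition is_sup (P : nat -> Prop) (e : enat) : Prop :=
  (forall n, P n -> ele (Fin n) e) /\
  (forall b, (forall n, P n -> ele (Fin n) b) -> ele e b).

Definition D_is {C : Category} (A : C) (e : enat) : Prop := is_sup (has_chain A) e.
Definition SD_is {C : Category} (A : C) (e : enat) : Prop := is_sup (has_schain A) e.

Definition d_equality {C : Category} (X : C) : Prop :=
  forall Y : C, dle Y X -> dle X Y -> iso Y X.

(* Every strict s-step is a proper step, since isomorphic objects are retracts of
   each other.  Conversely, in a chain below A each X_i is a retract of A, so X_i has
   the d-equality property: if also X_i <=^d X_{i+1}, then X_{i+1} and X_i would be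
   isomorphic, which a proper step excludes.  So chains and s-chains for A are the same,
   and hence so are the suprema of their lengths. *)
From Stdlib Require Import Arith Lia.

Lemma dle_trans {C : Category} (X Y Z : C) : dle X Y -> dle Y Z -> dle X Z.
Proof.
  intros [f [g Hgf]] [f' [g' Hgf']].
  exists (comp f' f), (comp g g').
  rewrite comp_assoc, <- (comp_assoc _ _ _ _ _ f' g' g), Hgf', comp_idr.
  exact Hgf.
Qed.

Lemma iso_sym_dle {C : Category} (X Y : C) : iso X Y -> dle Y X.
Proof. intros [f [g [_ Hfg]]]. exists g, f. exact Hfg. Qed.

Lemma slt_plt {C : Category} (X Y : C) : slt X Y -> plt X Y.
Proof.
  intros [Hle Hnge]. split; [exact Hle|].
  intro Hiso. exact (Hnge (iso_sym_dle X Y Hiso)).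
Qed.

Lemma plt_slt {C : Category} (X Y : C) : d_equality Y -> plt X Y -> slt X Y.
Proof.
  intros HY [Hle Hniso]. split; [exact Hle|].
  intro Hge. exact (Hniso (HY X Hle Hge)).
Qed.

Lemma has_chain_rel_impl {C : Category} (R R' : C -> C -> Prop) (A : C) (k : nat) :
  (forall X Y, R X Y -> dle X Y) ->
  (forall X Y, dle Y A -> R X Y -> R' X Y) ->
  has_chain_rel R A k -> has_chain_rel R' A k.
Proof.
  intros HR_dle HRR' [Hk [X [HX1 HXR]]].
  split; [exact Hk|]. exists X. split; [exact HX1|].
  assert (HXA : forall i, 1 <= i -> i <= k -> dle (X i) A).
  { induction i as [|i IH]; intros Hi Hik; [lia|].
    destruct i as [|i]; [exact HX1|].
    apply dle_trans with (X (S i)).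
    - apply HR_dle, HXR; lia.
    - apply IH; lia. }
  intros i Hi Hik. apply HRR'; [apply HXA; lia | apply HXR; assumption].
Qed.

Lemma is_sup_ext (P Q : nat -> Prop) (e : enat) :
  (forall n, P n <-> Q n) -> is_sup P e <-> is_sup Q e.
Proof.
  intros HPQ. unfold is_sup.
  split; intros [Hub Hleast]; split.
  - intros n Hn. apply Hub, HPQ, Hn.
  - intros b Hb. apply Hleast. intros n Hn. apply Hb, HPQ, Hn.
  - intros n Hn. apply Hub, HPQ, Hn.
  - intros b Hb. apply Hleast. intros n Hn. apply Hb, HPQ, Hn.
Qed.

Theorem proposition2p14 (C : Category) (A : C)
  (H : forall X : C, dle X A -> d_equality X) :
  forall e : enat, D_is A e <-> SD_is A e.
Proof.
  intro e. apply is_sup_ext. intro k. split.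
  - apply has_chain_rel_impl.
    + intros X Y [Hle _]. exact Hle.
    + intros X Y HYA. apply plt_slt, H, HYA.
  - apply has_chain_rel_impl.
    + intros X Y [Hle _]. exact Hle.
    + intros X Y _. apply slt_plt.
Qed.
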